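(* Let $f \in L^1([-\pi,\pi])$ have real Fourier coefficients. Write $f = f_R + \mathrm{i} f_I$ with $f_R, f_I$ real-valued, and assume $f_R$ is essentially positive. Let $A_n := A_n(f)\in\mathbb{R}^{n\times n}$ be the Toeplitz matrix generated by $f$, let $A_R := A_n(f_R) = (A_n + A_n^T)/2$, and let $Y_n$ be the $n\times n$ exchange matrix. Let \[S := \operatorname*{ess\,sup}_{\theta\in[-\pi,\pi]} \left|\frac{f_I(\theta)}{f_R(\theta)}\right|.\] Then there is $\epsilon$ with $0\le \epsilon\le S$, and $\epsilon<S$ whenever $f_I$ is not zero almost everywhere, such that all eigenvalues of the symmetric matrix $A_R^{-1/2}(Y_n A_n)A_R^{-1/2}$ lie in $[-1-\epsilon,-1]\cup[1,1+\epsilon]$.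
   Context: For $g\in L^1([-\pi,\pi])$, $A_n(g)$ denotes the $n\times n$ Toeplitz matrix whose $(i,j)$ entry is $\frac{1}{2\pi}\int_{-\pi}^{\pi} g(\theta)e^{-\mathrm{i}(i-j)\theta}\,d\theta$. The exchange matrix $Y_n$ has $(Y_n)_{ij}=1$ if $i+j=n+1$ and $0$ otherwise. ''Essentially positive'' means positive almost everywhere. $A_R$ is symmetric positive definite, and $A_R^{-1/2}$ is the inverse of its symmetric positive definite square root. *)

From HB Require Import structures.
From mathcomp Require Import all_boot all_order all_algebra.
From mathcomp Require Import all_classical all_reals all_analysis.
From mathcomp Require Import complex ess_sup_inf.
Set Implicit Arguments. Unset Strict Implicit. Unset Printing Implicit Defensive.
Import Order.TTheory GRing.Theory Num.Theory.
Import numFieldNormedType.Exports.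
Local Open Scope classical_set_scope.
Local Open Scope ring_scope.
Local Open Scope complex_scope.

Section defs.
Context {R : realType}.
Local Notation mu := (@lebesgue_measure R).

Definition Ipi : set R := `[(- pi)%R, pi]%classic.
Lemma measurable_Ipi : measurable Ipi.
Proof. exact: measurable_itv. Qed.
Definition muI := mrestr mu measurable_Ipi.

(** k-th Fourier coefficient  (1/2pi) \int_{-pi}^{pi} g(t) e^{-i k t} dt
    of the complex function g = gR + i gI, written out in real and
    imaginary parts (e^{-ikt} = cos(kt) - i sin(kt)). *)
Definition fourier_coef (gR gI : R -> R) (k : int) : R[i] :=
  ((2 * pi)^-1 * Rintegral mu Ipi
      (fun t => gR t * cos (k%:~R * t) + gI t * sin (k%:~R * t)))%R
  +i*
  ((2 * pi)^-1 * Rintegral mu Ipi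
      (fun t => gI t * cos (k%:~R * t) - gR t * sin (k%:~R * t)))%R.

Definition toeplitz (n : nat) (gR gI : R -> R) : 'M[R[i]]_n :=
  \matrix_(i < n, j < n) fourier_coef gR gI (i%:Z - j%:Z).

(** entrywise real part (used for matrices whose entries are real) *)
Definition mxRe (n : nat) (M : 'M[R[i]]_n) : 'M[R]_n :=
  \matrix_(i < n, j < n) complex.Re (M i j).

(** exchange matrix: 1 iff i + j = n + 1 (1-based), i.e. i + j = n - 1 (0-based) *)
Definition exchange (n : nat) : 'M[R]_n :=
  \matrix_(i < n, j < n) ((i + j)%N == n.-1)%:R.

Definition spd (n : nat) (B : 'M[R]_n) : Prop :=
  B^T = B /\ forall v : 'cV[R]_n, v != 0 -> 0 < (v^T *m B *m v) 0 0.
End defs.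

From HB Require Import structures.
From mathcomp Require Import all_boot all_order all_algebra.
From mathcomp Require Import all_classical all_reals all_analysis.
From mathcomp Require Import complex ess_sup_inf.
From mathcomp Require Import ring lra zify measurable_realfun.
Import Order.TTheory GRing.Theory Num.Theory.
Import numFieldNormedType.Exports.
Local Open Scope classical_set_scope.
Local Open Scope ring_scope.

(* Write A_n(f) = A_R + A_S, where A_R is the Toeplitz matrix of the cosine
   coefficients of f_R (symmetric) and A_S that of the sine coefficients of f_I
   (skew-symmetric); conjugation by the exchange matrix Y fixes A_R and negates
   A_S.  If v B^-1 Y A B^-1 = lam v, then x = v B^-1 solves x Y A = lam x A_R,
   and the same identity for x Y A Y = x (A_R - A_S) gives
     lam^2 (x A_R x^T) = x A_R x^T + z A_R z^T,   z = x A_S A_R^-1,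
   so lam^2 >= 1.  Integrating |f_I| <= s f_R against the vectors (cos kt)_k,
   (sin kt)_k gives 2 a A_S b^T <= s (a A_R a^T + b A_R b^T) for all a, b;
   with a = -z/s and b = x this is z A_R z^T <= s^2 x A_R x^T, whence
   lam^2 <= 1 + s^2.  So eps = sqrt (1 + s^2) - 1 works for s the essential
   supremum of |f_I / f_R|, and eps < s unless s = 0, i.e. f_I = 0 a.e. *)

(** * Quadratic forms and the exchange-symmetric pencil *)

Section BilinearForm.
Context {R : realFieldType} {n : nat}.
Implicit Types (a b x : 'rV[R]_n) (s : R) (A B K M : 'M[R]_n).

Definition bform a M b : R := (a *m M *m b^T) 0 0.

Definition form_dominated s K A :=
  forall a b, 2 * bform a K b <= s * (bform a A a + bform b A b).

Lemma bformE a M b : bform a M b = \sum_i \sum_j a 0 i * M i j * b 0 j.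
Proof.
rewrite /bform mxE (eq_bigr (fun j => \sum_i a 0 i * M i j * b 0 j)).
  by rewrite exchange_big.
by move=> j _; rewrite !mxE mulr_suml.
Qed.

Lemma bformZl t a M b : bform (t *: a) M b = t * bform a M b.
Proof. by rewrite /bform -!scalemxAl mxE. Qed.

Lemma bformZr t a M b : bform a M (t *: b) = t * bform a M b.
Proof. by rewrite /bform linearZ /= -scalemxAr mxE. Qed.

Lemma bformZ t a M b : bform a (t *: M) b = t * bform a M b.
Proof. by rewrite /bform -scalemxAr -scalemxAl mxE. Qed.

Lemma bformD a M N b : bform a (M + N) b = bform a M b + bform a N b.
Proof. by rewrite /bform mulmxDr mulmxDl mxE. Qed.

Lemma bformB a M N b : bform a (M - N) b = bform a M b - bform a N b.
Proof. by rewrite /bform mulmxBr mulmxBl !mxE. Qed.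

Lemma bform_outer a (u v : 'rV[R]_n) b :
  bform a (u^T *m v) b = (a *m u^T) 0 0 * (b *m v^T) 0 0.
Proof.
rewrite /bform mulmxA -mulmxA mxE big_ord1.
by congr (_ * _); rewrite !mxE; apply: eq_bigr => i _; rewrite !mxE mulrC.
Qed.

Lemma bform_tr a M b : bform a M b = bform b M^T a.
Proof.
have -> : bform a M b = (a *m M *m b^T)^T 0 0 by rewrite mxE.
by rewrite !trmx_mul trmxK mulmxA.
Qed.

Lemma mul_tr_rV_ge0 (u : 'rV[R]_n) : 0 <= (u *m u^T) 0 0.
Proof. by rewrite mxE; apply: sumr_ge0 => i _; rewrite mxE -expr2 sqr_ge0. Qed.

Lemma mul_tr_rV_gt0 (u : 'rV[R]_n) : u != 0 -> 0 < (u *m u^T) 0 0.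
Proof.
move=> /rV0Pn [i ui]; rewrite mxE (bigD1 i) //= ltr_pwDl //.
  by rewrite mxE -expr2 lt_def sqr_ge0 andbT sqrf_eq0.
by apply: sumr_ge0 => j _; rewrite mxE -expr2 sqr_ge0.
Qed.

Lemma bform_gram a B : B^T = B -> bform a (B *m B) a = ((a *m B) *m (a *m B)^T) 0 0.
Proof. by move=> BT; rewrite /bform trmx_mul BT !mulmxA. Qed.

End BilinearForm.

Lemma le_sqr_mul_of_quadratic_bound (R : realFieldType) (s q r : R) :
  0 <= s -> (forall t, 2 * t * q <= s * (t ^+ 2 * q + r)) -> q <= s ^+ 2 * r.
Proof.
move=> s0 h; have [s_eq0|s_neq0] := eqVneq s 0.
  by have := h 1; rewrite s_eq0 expr0n /= !mul0r; lra.
have s_gt0 : 0 < s by rewrite lt_def s_neq0.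
have := h s^-1; rewrite -(ler_pM2l s_gt0).
have -> : s * (2 * s^-1 * q) = 2 * q by field.
have -> : s * (s * (s^-1 ^+ 2 * q + r)) = q + s ^+ 2 * r by field.
lra.
Qed.

Section ExchangeSymmetricPencil.
Context {R : realFieldType} {n : nat} {Y AR AS : 'M[R]_n}.
Hypothesis YY : Y *m Y = 1%:M.
Hypothesis YARY : Y *m AR *m Y = AR.
Hypothesis YASY : Y *m AS *m Y = - AS.
Hypothesis AS_skew : AS^T = - AS.
Hypothesis AR_unit : AR \in unitmx.
Implicit Types (x : 'rV[R]_n) (lam s : R).

Local Notation schur x := (x *m AS *m invmx AR).

Lemma skew_schur_bform x : bform (schur x) AS x = - bform (schur x) AR (schur x).
Proof.
rewrite bform_tr AS_skew /bform mulmxKV // mulmxN mulNmx.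
by rewrite [LHS]mxE.
Qed.

Lemma pencil_eigen_sqr x lam : x *m (Y *m (AR + AS)) = lam *: (x *m AR) ->
  lam ^+ 2 *: (x *m AR) = x *m AR - schur x *m AS.
Proof.
move=> e1.
have ARY : AR *m Y = Y *m AR by rewrite -{1}YARY -!mulmxA YY mulmx1.
have e2 : x *m (AR - AS) = lam *: (x *m AR *m Y).
  have YAY : Y *m (AR + AS) *m Y = AR - AS by rewrite mulmxDr mulmxDl YARY YASY.
  by rewrite -YAY mulmxA e1 !scalemxAl.
have M1 : (AR - AS) *m invmx AR *m (AR + AS) = AR - AS *m invmx AR *m AS.
  rewrite mulmxBl mulmxV // mulmxBl mul1mx mulmxDr mulmxKV //.
  by rewrite opprD addrA addrK.
have -> : x *m AR - schur x *m AS = x *m ((AR - AS) *m invmx AR *m (AR + AS)).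
  by rewrite M1 mulmxBr !mulmxA.
rewrite !mulmxA e2 -!scalemxAl -(mulmxA x AR Y) ARY mulmxA mulmxK //.
by rewrite -mulmxA e1 scalerA expr2.
Qed.

Lemma pencil_eigen_sqr_bform x lam : x *m (Y *m (AR + AS)) = lam *: (x *m AR) ->
  lam ^+ 2 * bform x AR x = bform x AR x + bform (schur x) AR (schur x).
Proof.
move=> /pencil_eigen_sqr e.
have := congr1 (fun M => (M *m x^T) 0 0) e; rewrite /= -scalemxAl mulmxBl mxE.
rewrite [X in _ = X]mxE [X in _ = _ + X]mxE.
by rewrite -[(schur x *m AS *m x^T) 0 0]/(bform (schur x) AS x) skew_schur_bform opprK.
Qed.

Lemma dominated_schur_bform s x : 0 <= s -> form_dominated s AS AR ->
  bform (schur x) AR (schur x) <= s ^+ 2 * bform x AR x.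
Proof.
move=> s0 dom; apply: le_sqr_mul_of_quadratic_bound => // t.
have := dom (- t *: schur x) x.
rewrite bformZl skew_schur_bform !bformZl bformZr.
by rewrite mulrN mulNr opprK mulrA expr2 mulNr mulrN opprK mulrA.
Qed.

End ExchangeSymmetricPencil.

Lemma pencil_eigen_sqr_bound {R : realFieldType} {n : nat} {Y AR AS B : 'M[R]_n}
    {s lam : R} :
  Y *m Y = 1%:M -> Y *m AR *m Y = AR -> Y *m AS *m Y = - AS -> AS^T = - AS ->
  B^T = B -> B \in unitmx -> B *m B = AR -> 0 <= s -> form_dominated s AS AR ->
  eigenvalue (invmx B *m (Y *m (AR + AS)) *m invmx B) lam ->
  1 <= lam ^+ 2 <= 1 + s ^+ 2.
Proof.
move=> YY YARY YASY AS_skew BT Bu BB s0 dom /eigenvalueP [v vM v_neq0].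
have ARu : AR \in unitmx by rewrite -BB unitmx_mul Bu.
set x := v *m invmx B.
have xB : x *m B = v by rewrite mulmxKV.
have pencil : x *m (Y *m (AR + AS)) = lam *: (x *m AR).
  move: vM; rewrite !mulmxA => /(congr1 (mulmx^~ B)).
  by rewrite mulmxKV // -/x -scalemxAl -xB -(mulmxA x B B) BB.
have r_gt0 : 0 < bform x AR x by rewrite -BB bform_gram // xB mul_tr_rV_gt0.
have q_ge0 u : 0 <= bform u AR u by rewrite -BB bform_gram // mul_tr_rV_ge0.
have := pencil_eigen_sqr_bform YY YARY YASY AS_skew ARu _ _ pencil.
have := dominated_schur_bform AS_skew ARu _ x s0 dom.
have := q_ge0 (x *m AS *m invmx AR).
move: (bform _ AR _) (bform x AR x) (lam ^+ 2) r_gt0 => q r l2 r_gt0 q0 qs e.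
apply/andP; split; nra.
Qed.

Section CrudeDomination.
Context {R : realFieldType} {n : nat}.
Implicit Types (u v : 'rV[R]_n) (B K : 'M[R]_n).

Lemma sqr_coord_le_rV u i : u 0 i ^+ 2 <= (u *m u^T) 0 0.
Proof.
rewrite mxE (bigD1 i) //= mxE -expr2 lerDl.
by apply: sumr_ge0 => j _; rewrite mxE -expr2 sqr_ge0.
Qed.

Lemma bform_le_sum_norm K u v :
  2 * bform u K v <= (\sum_i \sum_j `|K i j|) * ((u *m u^T) 0 0 + (v *m v^T) 0 0).
Proof.
rewrite bformE mulr_sumr mulr_suml; apply: ler_sum => i _.
rewrite mulr_sumr mulr_suml; apply: ler_sum => j _.
have le_uv : u 0 i ^+ 2 + v 0 j ^+ 2 <= (u *m u^T) 0 0 + (v *m v^T) 0 0.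
  by rewrite lerD ?sqr_coord_le_rV.
have [k0|k0] := lerP 0 (K i j).
  have := mulr_ge0 k0 (sqr_ge0 (u 0 i - v 0 j)); rewrite ger0_norm //; nra.
have nk0 : 0 <= - K i j by rewrite oppr_ge0 ltW.
have := mulr_ge0 nk0 (sqr_ge0 (u 0 i + v 0 j)).
rewrite ltr0_norm //; nra.
Qed.

Lemma form_dominated_exists K B : B^T = B -> B \in unitmx ->
  exists2 c, 0 <= c & form_dominated c K (B *m B).
Proof.
move=> BT Bu; set K' := invmx B *m K *m invmx B.
exists (\sum_i \sum_j `|K' i j|); first by do 2![apply: sumr_ge0 => ? _].
move=> a b; rewrite !bform_gram //.
have -> : bform a K b = bform (a *m B) K' (b *m B).
  by rewrite /bform trmx_mul BT /K' !mulmxA mulmxKV // -!mulmxA mulKVmx.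
exact: bform_le_sum_norm.
Qed.

End CrudeDomination.

Section BandWidth.
Context {R : rcfType}.
Implicit Types (s lam : R).

Definition band_width s := Num.sqrt (1 + s ^+ 2) - 1.

Lemma band_widthE s : band_width s + 1 = Num.sqrt (1 + s ^+ 2).
Proof. by rewrite /band_width subrK. Qed.

Lemma band_width_sqr s : (band_width s + 1) ^+ 2 = 1 + s ^+ 2.
Proof. by rewrite band_widthE sqr_sqrtr // addr_ge0 ?sqr_ge0. Qed.

Lemma band_width_ge0 s : 0 <= band_width s.
Proof.
have := band_width_sqr s; have := sqrtr_ge0 (1 + s ^+ 2); rewrite -band_widthE.
by have := sqr_ge0 s; nra.
Qed.

Lemma band_width_le s : 0 <= s -> band_width s <= s.
Proof.
move=> s0; have := band_width_sqr s; have := band_width_ge0 s; nra.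
Qed.

Lemma band_width_lt s : 0 < s -> band_width s < s.
Proof.
move=> s0; have := band_width_sqr s; have := band_width_ge0 s; nra.
Qed.

Lemma sqr_in_band s lam : 1 <= lam ^+ 2 <= 1 + s ^+ 2 ->
  (-1 - band_width s <= lam <= -1) \/ (1 <= lam <= 1 + band_width s).
Proof.
rewrite -band_width_sqr => /andP [lam1 lam_le]; have := band_width_ge0 s.
by have [lam0|lam0] := lerP 0 lam; [right | left]; apply/andP; split; nra.
Qed.

End BandWidth.

Lemma spd_unitmx {R : realType} {n : nat} {B : 'M[R]_n} : spd B -> B \in unitmx.
Proof.
move=> [BT Bpos]; rewrite -row_free_unit -kermx_eq0.
apply/negPn/negP => /rowV0Pn [v /sub_kermxP vB v_neq0].
have vT_neq0 : v^T != 0.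
  by apply: contra v_neq0 => /eqP/(congr1 trmx); rewrite trmxK trmx0 => ->.
have := Bpos _ vT_neq0; rewrite trmxK -mulmxA (_ : B *m v^T = 0).
  by rewrite mulmx0 mxE ltxx.
by rewrite -BT -trmx_mul vB trmx0.
Qed.

Lemma spd_pencil_in_band {R : realType} {n : nat} {Y AR AS : 'M[R]_n} {s : R} :
  Y *m Y = 1%:M -> Y *m AR *m Y = AR -> Y *m AS *m Y = - AS -> AS^T = - AS ->
  0 <= s -> form_dominated s AS AR ->
  forall B, spd B -> B *m B = AR ->
  forall lam, eigenvalue (invmx B *m (Y *m (AR + AS)) *m invmx B) lam ->
  (-1 - band_width s <= lam <= -1) \/ (1 <= lam <= 1 + band_width s).
Proof.
move=> YY YARY YASY AS_skew s0 dom B Bspd BB lam ev; apply: sqr_in_band.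
have Bu := spd_unitmx Bspd; have [BT _] := Bspd.
exact: (pencil_eigen_sqr_bound YY YARY YASY AS_skew BT Bu BB s0 dom ev).
Qed.

Lemma spd_sqrt_dominated_exists {R : realType} {n : nat} (K A : 'M[R]_n) :
  exists2 c, 0 <= c & forall B, spd B -> B *m B = A -> form_dominated c K A.
Proof.
have [[B0 [B0_spd <-]] | noB] := pselect (exists B, spd B /\ B *m B = A).
  have [c c_ge0 dom] := form_dominated_exists K B0 B0_spd.1 (spd_unitmx B0_spd).
  by exists c.
by exists 0 => // B B_spd BB; case: noB; exists B.
Qed.

(** * Exchange and Toeplitz matrices *)

Section ExchangeToeplitz.
Context {R : realType}.

Definition rtoeplitz n (c : int -> R) : 'M[R]_n := \matrix_(i, j) c (i%:Z - j%:Z).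

Context {n : nat}.
Implicit Types (c : int -> R) (M : 'M[R]_n).

Lemma exchange_rev_ord (i k : 'I_n) : ((i + k)%N == n.-1) = (k == rev_ord i).
Proof.
apply/eqP/eqP => [h|->]; first by apply: val_inj => /=; have := ltn_ord i; lia.
by rewrite /=; have := ltn_ord i; lia.
Qed.

Lemma mul_exchange_mx M i j : (exchange n *m M) i j = M (rev_ord i) j.
Proof.
rewrite mxE (bigD1 (rev_ord i)) //= big1 ?addr0.
  by rewrite mxE exchange_rev_ord eqxx mul1r.
by move=> k kn; rewrite mxE exchange_rev_ord (negbTE kn) mul0r.
Qed.

Lemma mulmx_exchange M i j : (M *m exchange n) i j = M i (rev_ord j).
Proof.
rewrite mxE (bigD1 (rev_ord j)) //= big1 ?addr0.
  by rewrite mxE addnC exchange_rev_ord eqxx mulr1.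
by move=> k kn; rewrite mxE addnC exchange_rev_ord (negbTE kn) mulr0.
Qed.

Lemma exchange_sqr : exchange n *m exchange n = 1%:M :> 'M[R]_n.
Proof.
by apply/matrixP => i j; rewrite mul_exchange_mx !mxE exchange_rev_ord rev_ordK eq_sym.
Qed.

Lemma exchange_rtoeplitz c :
  exchange n *m rtoeplitz n c *m exchange n = rtoeplitz n (fun k => c (- k)).
Proof.
apply/matrixP => i j; rewrite mulmx_exchange mul_exchange_mx !mxE /=; congr c.
by have := ltn_ord i; have := ltn_ord j; lia.
Qed.

Lemma exchange_rtoeplitz_even {c} : (forall k, c (- k) = c k) ->
  exchange n *m rtoeplitz n c *m exchange n = rtoeplitz n c.
Proof.
by move=> c_even; rewrite exchange_rtoeplitz; apply/matrixP => i j; rewrite !mxE c_even.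
Qed.

Lemma exchange_rtoeplitz_odd {c} : (forall k, c (- k) = - c k) ->
  exchange n *m rtoeplitz n c *m exchange n = - rtoeplitz n c.
Proof.
by move=> c_odd; rewrite exchange_rtoeplitz; apply/matrixP => i j; rewrite !mxE c_odd.
Qed.

Lemma rtoeplitzZ (t : R) c : rtoeplitz n (fun k => t * c k) = t *: rtoeplitz n c.
Proof. by apply/matrixP => i j; rewrite !mxE. Qed.

Lemma trmx_rtoeplitz c : (rtoeplitz n c)^T = rtoeplitz n (fun k => c (- k)).
Proof. by apply/matrixP => i j; rewrite !mxE opprB. Qed.

Lemma trmx_rtoeplitz_odd {c} : (forall k, c (- k) = - c k) ->
  (rtoeplitz n c)^T = - rtoeplitz n c.
Proof.
by move=> c_odd; rewrite trmx_rtoeplitz; apply/matrixP => i j; rewrite !mxE c_odd.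
Qed.

End ExchangeToeplitz.

(** * Trigonometric Toeplitz matrices of integrable functions *)

Section RealIntegrals.
Context {d : measure_display} {T : measurableType d} {R : realType}.
Context {mu : {measure set T -> \bar R}} {D : set T}.
Hypothesis mD : measurable D.
Implicit Types (f g : T -> R).

Lemma ae_mrestr (P : T -> Prop) :
  {ae mrestr mu mD, forall x, P x} -> {ae mu, forall x, D x -> P x}.
Proof.
case=> N [mN N0 PN]; exists (N `&` D); split => //; first exact: measurableI.
by move=> x /= /not_implyP [Dx nPx]; split => //; apply: PN.
Qed.

Lemma integrable_EFinD f g : mu.-integrable D (EFin \o f) ->
  mu.-integrable D (EFin \o g) -> mu.-integrable D (EFin \o (f \+ g)).
Proof. exact: integrableD. Qed.

Lemma integrable_EFinZ (c : R) f :
  mu.-integrable D (EFin \o f) -> mu.-integrable D (EFin \o (fun t => c * f t)).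
Proof. exact: integrableZl. Qed.

Lemma integrable_EFin_sum (I : Type) (r : seq I) (F : I -> T -> R) :
  (forall i, mu.-integrable D (EFin \o F i)) ->
  mu.-integrable D (EFin \o (fun t => \sum_(i <- r) F i t)).
Proof.
move=> iF; apply: (@eq_integrable _ _ _ _ _ mD (fun t => \sum_(i <- r) (F i t)%:E)).
  by move=> t _ /=; rewrite sumEFin.
by apply: integrable_sum => // i _; exact: iF.
Qed.

Lemma Rintegral_sum (I : Type) (r : seq I) (F : I -> T -> R) :
  (forall i, mu.-integrable D (EFin \o F i)) ->
  \int[mu]_(t in D) (\sum_(i <- r) F i t) = \sum_(i <- r) \int[mu]_(t in D) F i t.
Proof.
move=> iF; elim: r => [|i r IH].
  by rewrite big_nil; under eq_Rintegral do rewrite big_nil; rewrite Rintegral_cst // mul0r.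
rewrite big_cons -IH; under eq_Rintegral do rewrite big_cons.
by rewrite RintegralD //; apply: integrable_EFin_sum.
Qed.

Lemma le_Rintegral_ae f g : mu.-integrable D (EFin \o f) -> mu.-integrable D (EFin \o g) ->
  {ae mu, forall x, D x -> f x <= g x} -> \int[mu]_(x in D) f x <= \int[mu]_(x in D) g x.
Proof.
move=> i_f i_g fg; rewrite -subr_ge0 -RintegralB //.
have mgf : measurable_fun D (g \- f).
  apply: measurable_funB; apply/measurable_EFinP.
    exact: measurable_int i_g.
  exact: measurable_int i_f.
rewrite /Rintegral (ae_eq_integral (fun x => (Num.max (g x - f x) 0)%:E)) //.
- by apply: fine_ge0; apply: integral_ge0 => x _; rewrite lee_fin le_max lexx orbT.
- exact/measurable_EFinP.
- by apply/measurable_EFinP; apply: measurable_maxr.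
- by apply: filterS fg => x fgx Dx; rewrite max_l // subr_ge0 fgx.
Qed.

End RealIntegrals.

Section TrigonometricToeplitz.
Context {R : realType}.
Local Notation mu := (@lebesgue_measure R).
Implicit Types (g : R -> R) (k : int).

Lemma integrable_mul_bounded (phi : R -> R) g (a : R) :
  continuous phi -> (forall x, `|phi x| <= 1) -> mu.-integrable Ipi (EFin \o g) ->
  mu.-integrable Ipi (EFin \o (fun t => g t * phi (a * t))).
Proof.
move=> phi_cont phi_le1 ig.
apply: (@le_integrable _ _ _ mu _ measurable_Ipi _ (EFin \o g)) => //; last first.
  by move=> x _; rewrite /= lee_fin normrM ler_piMr.
apply/measurable_EFinP; apply: measurable_funM.
  by apply/measurable_EFinP; exact: (measurable_int mu ig).
apply: (measurable_funS measurableT) => //.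
apply: (measurableT_comp (f := phi) (g := *%R a)); apply: continuous_measurable_fun => //.
exact: mulrl_continuous.
Qed.

Lemma integrable_mul_cos g (a : R) : mu.-integrable Ipi (EFin \o g) ->
  mu.-integrable Ipi (EFin \o (fun t => g t * cos (a * t))).
Proof. by apply: integrable_mul_bounded; [exact: continuous_cos | exact: cos_max]. Qed.

Lemma integrable_mul_sin g (a : R) : mu.-integrable Ipi (EFin \o g) ->
  mu.-integrable Ipi (EFin \o (fun t => g t * sin (a * t))).
Proof. by apply: integrable_mul_bounded; [exact: continuous_sin | exact: sin_max]. Qed.

Definition cos_moment g k := Rintegral mu Ipi (fun t => g t * cos (k%:~R * t)).
Definition sin_moment g k := Rintegral mu Ipi (fun t => g t * sin (k%:~R * t)).
Definition fourier_cos g k := (2 * pi)^-1 * cos_moment g k.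
Definition fourier_sin g k := (2 * pi)^-1 * sin_moment g k.

Lemma fourier_cosN g k : fourier_cos g (- k) = fourier_cos g k.
Proof.
rewrite /fourier_cos /cos_moment; congr (_ * _).
by apply: eq_Rintegral => t _; rewrite intrN mulNr cosN.
Qed.

Lemma fourier_sinN g k : mu.-integrable Ipi (EFin \o g) ->
  fourier_sin g (- k) = - fourier_sin g k.
Proof.
move=> ig; rewrite /fourier_sin /sin_moment -mulrN; congr (_ * _).
rewrite -mulN1r -RintegralZl; [| exact: measurable_Ipi | exact: integrable_mul_sin].
by apply: eq_Rintegral => t _; rewrite intrN mulNr sinN mulrN mulN1r.
Qed.

Lemma mxRe_toeplitz n fR fI :
  mu.-integrable Ipi (EFin \o fR) -> mu.-integrable Ipi (EFin \o fI) ->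
  mxRe (toeplitz n fR fI) = rtoeplitz n (fourier_cos fR) + rtoeplitz n (fourier_sin fI).
Proof.
move=> iR iI; apply/matrixP => i j; rewrite !mxE /= -mulrDr; congr (_ * _).
rewrite RintegralD //; first exact: measurable_Ipi.
  exact: integrable_mul_cos.
exact: integrable_mul_sin.
Qed.

Lemma mxRe_toeplitz_real n fR :
  mxRe (toeplitz n fR (fun _ => 0)) = rtoeplitz n (fourier_cos fR).
Proof.
apply/matrixP => i j; rewrite !mxE /=; congr (_ * _).
by apply: eq_Rintegral => t _; rewrite mul0r addr0.
Qed.

End TrigonometricToeplitz.

Section ToeplitzIntegral.
Context {d : measure_display} {T : measurableType d} {R : realType} {n : nat}.
Context {mu : {measure set T -> \bar R}} {D : set T}.
Hypothesis mD : measurable D.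
Context {h : int -> T -> R}.
Hypothesis ih : forall k, mu.-integrable D (EFin \o h k).
Implicit Types (a b : 'rV[R]_n).

Let bform_rtoeplitz_sum a b : (fun t => bform a (rtoeplitz n (h ^~ t)) b) =
  (fun t => \sum_i \sum_j a 0 i * b 0 j * h (i%:Z - j%:Z) t).
Proof.
apply/funext => t; rewrite bformE; apply: eq_bigr => i _; apply: eq_bigr => j _.
by rewrite mxE mulrAC.
Qed.

Let integrable_term a b (i j : 'I_n) :
  mu.-integrable D (EFin \o (fun t => a 0 i * b 0 j * h (i%:Z - j%:Z) t)).
Proof. exact: integrable_EFinZ. Qed.

Lemma integrable_bform_rtoeplitz a b :
  mu.-integrable D (EFin \o (fun t => bform a (rtoeplitz n (h ^~ t)) b)).
Proof.
rewrite bform_rtoeplitz_sum.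
apply: integrable_EFin_sum => // i.
by apply: integrable_EFin_sum => // j; exact: integrable_term.
Qed.

Lemma bform_rtoeplitz_Rintegral a b :
  bform a (rtoeplitz n (fun k => \int[mu]_(t in D) h k t)) b =
  \int[mu]_(t in D) bform a (rtoeplitz n (h ^~ t)) b.
Proof.
rewrite bform_rtoeplitz_sum Rintegral_sum //; last first.
  by move=> i; apply: integrable_EFin_sum => // j; exact: integrable_term.
rewrite bformE; apply: eq_bigr => i _; rewrite Rintegral_sum //.
by apply: eq_bigr => j _; rewrite RintegralZl // mxE mulrAC.
Qed.

End ToeplitzIntegral.

Lemma cross_term_le (R : realFieldType) (u w ca sa cb sb : R) : `|u| <= w ->
  2 * (u * (sa * cb - ca * sb)) <= w * (ca ^+ 2 + sa ^+ 2 + (cb ^+ 2 + sb ^+ 2)).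
Proof.
rewrite ler_norml => /andP [wu uw]; rewrite -subr_ge0.
have -> : w * (ca ^+ 2 + sa ^+ 2 + (cb ^+ 2 + sb ^+ 2)) - 2 * (u * (sa * cb - ca * sb)) =
  (w + u) / 2 * ((sa - cb) ^+ 2 + (ca + sb) ^+ 2) +
  (w - u) / 2 * ((sa + cb) ^+ 2 + (ca - sb) ^+ 2) by field.
have wu0 : 0 <= w + u by lra.
have uw0 : 0 <= w - u by lra.
by apply: addr_ge0; apply: mulr_ge0; rewrite ?divr_ge0 // addr_ge0 // sqr_ge0.
Qed.

Section TrigToeplitzDomination.
Context {R : realType} {n : nat}.
Local Notation mu := (@lebesgue_measure R).
Implicit Types (a b : 'rV[R]_n) (t : R).

Definition cos_row t : 'rV[R]_n := \row_i cos (i%:R * t).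
Definition sin_row t : 'rV[R]_n := \row_i sin (i%:R * t).

Lemma rtoeplitz_cos t : rtoeplitz n (fun k => cos (k%:~R * t)) =
  (cos_row t)^T *m cos_row t + (sin_row t)^T *m sin_row t.
Proof. by apply/matrixP => i j; rewrite !mxE !big_ord1 !mxE intrB mulrBl cosB. Qed.

Lemma rtoeplitz_sin t : rtoeplitz n (fun k => sin (k%:~R * t)) =
  (sin_row t)^T *m cos_row t - (cos_row t)^T *m sin_row t.
Proof. by apply/matrixP => i j; rewrite !mxE !big_ord1 !mxE intrB mulrBl sinB. Qed.

Lemma bform_rtoeplitz_cos a b t : bform a (rtoeplitz n (fun k => cos (k%:~R * t))) b =
  (a *m (cos_row t)^T) 0 0 * (b *m (cos_row t)^T) 0 0 +
  (a *m (sin_row t)^T) 0 0 * (b *m (sin_row t)^T) 0 0.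
Proof. by rewrite rtoeplitz_cos bformD !bform_outer. Qed.

Lemma bform_rtoeplitz_sin a b t : bform a (rtoeplitz n (fun k => sin (k%:~R * t))) b =
  (a *m (sin_row t)^T) 0 0 * (b *m (cos_row t)^T) 0 0 -
  (a *m (cos_row t)^T) 0 0 * (b *m (sin_row t)^T) 0 0.
Proof. by rewrite rtoeplitz_sin bformB !bform_outer. Qed.

Lemma fourier_dominated {fR fI : R -> R} {s : R} :
  mu.-integrable Ipi (EFin \o fR) -> mu.-integrable Ipi (EFin \o fI) ->
  {ae muI, forall x, 0 < fR x} -> {ae muI, forall x, `|fI x / fR x| <= s} ->
  form_dominated s (rtoeplitz n (fourier_sin fI)) (rtoeplitz n (fourier_cos fR)).
Proof.
move=> iR iI fR_gt0 ratio_le a b.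
pose hc k t := fR t * cos (k%:~R * t); pose hs k t := fI t * sin (k%:~R * t).
have ihc k : mu.-integrable Ipi (EFin \o hc k) by exact: integrable_mul_cos.
have ihs k : mu.-integrable Ipi (EFin \o hs k) by exact: integrable_mul_sin.
rewrite /fourier_cos /fourier_sin !rtoeplitzZ !bformZ /cos_moment /sin_moment.
rewrite !(bform_rtoeplitz_Rintegral (mu := mu) measurable_Ipi ihc).
rewrite (bform_rtoeplitz_Rintegral (mu := mu) measurable_Ipi ihs).
rewrite -mulrDr mulrCA [leRHS]mulrCA ler_pM2l; last by rewrite invr_gt0 mulr_gt0 ?pi_gt0.
have iqc (u : 'rV[R]_n) := integrable_bform_rtoeplitz (mu := mu) measurable_Ipi ihc u u.
have iqs := integrable_bform_rtoeplitz (mu := mu) measurable_Ipi ihs a b.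
rewrite -RintegralZl; [|exact: measurable_Ipi|exact: iqs].
rewrite -(RintegralD _ (iqc a) (iqc b)); last exact: measurable_Ipi.
have iqcD := integrable_EFinD (mu := mu) measurable_Ipi _ _ (iqc a) (iqc b).
rewrite -RintegralZl; [|exact: measurable_Ipi|exact: iqcD].
have iqs2 := integrable_EFinZ (mu := mu) measurable_Ipi 2 _ iqs.
have iqcDs := integrable_EFinZ (mu := mu) measurable_Ipi s _ iqcD.
apply: (le_Rintegral_ae (mu := mu) measurable_Ipi _ _ iqs2 iqcDs).
apply: (ae_mrestr (mu := mu) measurable_Ipi).
(* instance search does not find the almost-everywhere filter of [muI] *)
apply: (filterS2 (ae_filter_ringOfSetsType muI) _ fR_gt0 ratio_le) => x fRx_gt0 ratio.
rewrite /hc /hs /= !rtoeplitzZ !bformZ bform_rtoeplitz_sin !bform_rtoeplitz_cos -!expr2.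
rewrite -mulrDr mulrA; apply: cross_term_le.
by rewrite -(divfK (lt0r_neq0 fRx_gt0) (fI x)) normrM (gtr0_norm fRx_gt0) ler_pM2r.
Qed.

End TrigToeplitzDomination.

Section AlmostEverywhere.
Context {d : measure_display} {T : measurableType d} {R : realType}.
Context {mu : {measure set T -> \bar R}}.
Implicit Types (f g : T -> R) (s : R).

Lemma ae_le_ess_sup_fin {f s} :
  ess_sup mu (EFin \o f) = s%:E -> {ae mu, forall x, f x <= s}.
Proof.
by move=> f_s; apply: filterS (ess_sup_ge mu (EFin \o f)) => x; rewrite f_s lee_fin.
Qed.

Lemma ae_ratio_bound_gt0 {f g s} : {ae mu, forall x, 0 < g x} ->
  {ae mu, forall x, `|f x / g x| <= s} -> ~ {ae mu, forall x, f x = 0} -> 0 < s.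
Proof.
move=> g_gt0 ratio_le f_neq0; rewrite ltNge; apply/negP => s_le0; apply: f_neq0.
apply: filterS2 g_gt0 ratio_le => x gx_gt0 /le_trans /(_ s_le0).
by rewrite normr_le0 mulf_eq0 invr_eq0 (gt_eqF gx_gt0) orbF => /eqP.
Qed.

End AlmostEverywhere.

Lemma muI_gt0 {R : realType} : (0 < muI [set: R])%E.
Proof.
rewrite /muI /mrestr setTI /Ipi lebesgue_measure_itv /= ifT.
  by rewrite lte_fin subr_gt0 gtrN ?pi_gt0.
by rewrite lte_fin gtrN ?pi_gt0.
Qed.

Theorem theorem3p4 (R : realType) (n : nat) (fR fI : R -> R) :
  (* f = fR + i fI is in L^1([-pi, pi]) *)
  (@lebesgue_measure R).-integrable Ipi (EFin \o fR) ->
  (@lebesgue_measure R).-integrable Ipi (EFin \o fI) ->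
  (* f has real Fourier coefficients *)
  (forall k : int, complex.Im (fourier_coef fR fI k) = 0) ->
  (* fR is essentially positive on [-pi, pi] *)
  {ae muI, forall x, 0 < fR x} ->
  exists eps : R,
    0 <= eps /\
    (eps%:E <= ess_sup muI (fun x => `|fI x / fR x|%:E))%E /\
    (~ {ae muI, forall x, fI x = 0} ->
       (eps%:E < ess_sup muI (fun x => `|fI x / fR x|%:E))%E) /\
    forall B : 'M[R]_n,
      spd B -> B *m B = mxRe (toeplitz n fR (fun _ => 0)) ->
      forall lam : R,
        eigenvalue (invmx B *m (exchange n *m mxRe (toeplitz n fR fI)) *m invmx B) lam ->
        (-1 - eps <= lam <= -1) \/ (1 <= lam <= 1 + eps).
Proof.
(* Real Fourier coefficients are what makes [mxRe] faithful to A_n(f); the proof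
   itself never needs them. *)
move=> iR iI _ fR_gt0.
rewrite mxRe_toeplitz_real mxRe_toeplitz //.
set AR := rtoeplitz n (fourier_cos fR); set AS := rtoeplitz n (fourier_sin fI).
have odd_AS k : fourier_sin fI (- k) = - fourier_sin fI k by exact: fourier_sinN.
have band := spd_pencil_in_band (n := n) exchange_sqr
  (exchange_rtoeplitz_even (fourier_cosN fR))
  (exchange_rtoeplitz_odd odd_AS) (trmx_rtoeplitz_odd odd_AS).
have : (0 <= ess_sup muI (fun x => `|fI x / fR x|%:E))%E.
  by apply: ess_sup_gee muI_gt0 _; apply: aeW => x; rewrite lee_fin.
case ES : ess_sup => [s| |] // S_ge0; last first.
  (* S = +oo bounds every eps, so any constant dominating A_S by A_R will do. *)
  have [c c_ge0 dom] := spd_sqrt_dominated_exists AS AR.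
  exists (band_width c); split; first exact: band_width_ge0.
  split; first exact: leey.
  split; first by move=> _; exact: ltey.
  by move=> B B_spd BB; exact: band c c_ge0 (dom B B_spd BB) B B_spd BB.
have s_ge0 : 0 <= s by rewrite -lee_fin.
have ratio_le := ae_le_ess_sup_fin ES.
exists (band_width s); split; first exact: band_width_ge0.
split; first by rewrite lee_fin band_width_le.
split; last exact: band s s_ge0 (fourier_dominated iR iI fR_gt0 ratio_le).
by move=> /(ae_ratio_bound_gt0 fR_gt0 ratio_le) s_gt0; rewrite lte_fin band_width_lt.
Qed.
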